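(* Let $\mathbb{A}$ be a reduced medial algebra of dimension at least $2$ over a field $\mathbb{K}$ of characteristic not $2,3$, and let $c_1,c_2$ be nonzero idempotents. Then $c_1c_2$ is a nonzero idempotent, and for all $\lambda_1,\lambda_2\in\mathbb{K}$, $$\mathbb{A}_{c_1}(\lambda_1)\mathbb{A}_{c_2}(\lambda_2)\subset\mathbb{A}_{c_1c_2}(\lambda_1\lambda_2),\qquad \mathbb{A}_{c_1}(\lambda_1)\mathbb{A}_{c_1}(\lambda_2)\subset\mathbb{A}_{c_1}(\lambda_1\lambda_2).$$ In particular $\sigma(c_1)\cup\sigma(c_2)\subset\sigma(c_1c_2)$, and $\dim\mathbb{A}_{c_j}(\lambda_j)\le\dim\mathbb{A}_{c_ic_j}(\lambda_j)$ for $\{i,j\}=\{1,2\}$ and all $\lambda_j\in\sigma(c_j)$.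
   Context: All algebras commutative, possibly nonassociative, finite-dimensional. Medial: $(xy)(zw)=(xz)(yw)$ identically. $L_c:x\mapsto cx$, $\mathbb{A}_c(\lambda)=\ker(L_c-\lambda\mathbf{1})$, and $\sigma(c)$ is the set of distinct eigenvalues of $L_c$. A medial algebra is reduced if $\ker L_c=0$ for every nonzero idempotent $c$. *)

From HB Require Import structures.
From mathcomp Require Import all_boot all_order all_algebra.
Set Implicit Arguments. Unset Strict Implicit. Unset Printing Implicit Defensive.
Import Order.TTheory GRing.Theory Num.Theory.
Local Open Scope ring_scope.

(* A commutative, possibly nonassociative, finite-dimensional algebra over a
   field F is modelled as a vectType V over F (finite-dimensional vector space)
   together with a multiplication mul : V -> V -> V which is commutative and
   linear in its second argument (hence bilinear). *)

Definition comm_bilinear (F : fieldType) (V : vectType F) (mul : V -> V -> V) :=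
  (forall x y, mul x y = mul y x) /\ (forall x, linear (mul x)).

Definition medial (F : fieldType) (V : vectType F) (mul : V -> V -> V) :=
  forall x y z w, mul (mul x y) (mul z w) = mul (mul x z) (mul y w).

Definition is_idem (F : fieldType) (V : vectType F) (mul : V -> V -> V) (c : V) :=
  mul c c = c.

Definition Lmul (F : fieldType) (V : vectType F) (mul : V -> V -> V) (c : V)
  : 'End(V) := linfun (mul c).

Definition reduced (F : fieldType) (V : vectType F) (mul : V -> V -> V) :=
  forall c : V, c != 0 -> is_idem mul c -> lker (Lmul mul c) = 0%VS.

Definition eigsp (F : fieldType) (V : vectType F) (mul : V -> V -> V) (c : V)
  (l : F) : {vspace V} := passmx.leigenspace (Lmul mul c) l.

Definition in_spec (F : fieldType) (V : vectType F) (mul : V -> V -> V) (c : V)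
  (l : F) : bool := passmx.leigenvalue (Lmul mul c) l.

From HB Require Import structures.
From mathcomp Require Import all_boot all_order all_algebra.
Import Order.TTheory GRing.Theory Num.Theory.
Set Implicit Arguments.
Unset Strict Implicit.
Unset Printing Implicit Defensive.
Local Open Scope ring_scope.

(* The whole statement rests on one consequence of the medial identity: if
   a x = l1 x and b y = l2 y then (ab)(xy) = (ax)(by) = l1 l2 (xy).  Applied
   with x = a idempotent (l1 = 1) it shows that L_a maps A_b(l) into A_(ab)(l);
   reducedness makes L_a injective, whence the dimension bounds and, since a
   spectrum is the set of l with a nonzero eigenspace, the spectral inclusion. *)

Section MedialEigenspaces.
Variables (F : fieldType) (V : vectType F) (mul : V -> V -> V).
Hypothesis mul_comm_bilinear : comm_bilinear mul.

Lemma mulC x y : mul x y = mul y x.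
Proof. exact: mul_comm_bilinear.1. Qed.

Definition mul_linear (c : V) : {linear V -> V} :=
  HB.pack (mul c) (GRing.isLinear.Build _ _ _ _ (mul c) (mul_comm_bilinear.2 c)).

Lemma LmulE c x : Lmul mul c x = mul c x.
Proof. exact: (lfunE (mul_linear c)). Qed.

Lemma mulv0 c : mul c 0 = 0.
Proof. exact: (raddf0 (mul_linear c)). Qed.

Lemma mulvZ c k x : mul c (k *: x) = k *: mul c x.
Proof. exact: (linearZ_LR (mul_linear c)). Qed.

Lemma mulZv c k x : mul (k *: x) c = k *: mul x c.
Proof. by rewrite mulC mulvZ mulC. Qed.

Lemma mem_eigsp c l v : (v \in eigsp mul c l) = (mul c v == l *: v).
Proof.
rewrite memv_ker add_lfunE opp_lfunE scale_lfunE id_lfunE LmulE.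
by rewrite subr_eq0.
Qed.

Lemma in_specE c l : in_spec mul c l = (0 < \dim (eigsp mul c l))%N.
Proof. by rewrite lt0n dimv_eq0. Qed.

Lemma idem_eigsp1 c : is_idem mul c -> c \in eigsp mul c 1.
Proof. by rewrite mem_eigsp scale1r => ->. Qed.

Hypothesis mul_medial : medial mul.

Lemma mul_eigsp a b l1 l2 x y :
  x \in eigsp mul a l1 -> y \in eigsp mul b l2 ->
  mul x y \in eigsp mul (mul a b) (l1 * l2).
Proof.
rewrite !mem_eigsp => /eqP ax /eqP by_.
by rewrite mul_medial ax by_ mulZv mulvZ scalerA.
Qed.

Lemma idem_mul a b : is_idem mul a -> is_idem mul b -> is_idem mul (mul a b).
Proof. by rewrite /is_idem mul_medial => -> ->. Qed.

Lemma mul_idem_eigsp a b l x : is_idem mul a ->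
  x \in eigsp mul b l -> mul a x \in eigsp mul (mul a b) l.
Proof. by move=> /idem_eigsp1 a1 bx; rewrite -[l]mul1r; apply: mul_eigsp. Qed.

Hypothesis mul_reduced : reduced mul.

Lemma mul_idem_neq0 a x : a != 0 -> is_idem mul a -> x != 0 -> mul a x != 0.
Proof.
move=> a_neq0 a_idem; apply: contraNneq => ax0; apply/eqP.
have /eqP/lker0P La_inj := mul_reduced a_neq0 a_idem.
by apply: La_inj; rewrite !LmulE ax0 mulv0.
Qed.

Lemma dim_eigsp_mul_idem a b l : a != 0 -> is_idem mul a ->
  (\dim (eigsp mul b l) <= \dim (eigsp mul (mul a b) l))%N.
Proof.
move=> a_neq0 a_idem.
rewrite -(limg_dim_eq (f := Lmul mul a)); last first.
  by rewrite (mul_reduced a_neq0 a_idem) capv0.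
apply: dimvS; apply/subvP => _ /memv_imgP [x bx ->].
by rewrite LmulE mul_idem_eigsp.
Qed.

Lemma in_spec_mul_idem a b l : a != 0 -> is_idem mul a ->
  in_spec mul b l -> in_spec mul (mul a b) l.
Proof.
rewrite !in_specE => a_neq0 a_idem b_l.
exact: leq_trans b_l (dim_eigsp_mul_idem b l a_neq0 a_idem).
Qed.

End MedialEigenspaces.

Theorem proposition4p2 (F : fieldType) (V : vectType F) (mul : V -> V -> V)
  (Hchar2 : 2%N \notin [pchar F]) (Hchar3 : 3%N \notin [pchar F])
  (Halg : comm_bilinear mul) (Hmed : medial mul) (Hred : reduced mul)
  (Hdim : (2 <= \dim (fullv : {vspace V}))%N)
  (c1 c2 : V) (Hc1 : c1 != 0) (Hc2 : c2 != 0)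
  (Hi1 : is_idem mul c1) (Hi2 : is_idem mul c2) :
  [/\ mul c1 c2 != 0 /\ is_idem mul (mul c1 c2),
      (forall (l1 l2 : F) (x y : V), x \in eigsp mul c1 l1 -> y \in eigsp mul c2 l2 ->
         mul x y \in eigsp mul (mul c1 c2) (l1 * l2)),
      (forall (l1 l2 : F) (x y : V), x \in eigsp mul c1 l1 -> y \in eigsp mul c1 l2 ->
         mul x y \in eigsp mul c1 (l1 * l2)),
      (forall l : F, in_spec mul c1 l || in_spec mul c2 l -> in_spec mul (mul c1 c2) l)
    & (forall l : F, in_spec mul c1 l ->
         (\dim (eigsp mul c1 l) <= \dim (eigsp mul (mul c2 c1) l))%N)
      /\ (forall l : F, in_spec mul c2 l ->
         (\dim (eigsp mul c2 l) <= \dim (eigsp mul (mul c1 c2) l))%N)].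
Proof.
split.
- by split; [apply: mul_idem_neq0 | apply: idem_mul].
- by move=> l1 l2 x y; apply: mul_eigsp.
- by move=> l1 l2 x y x1 y1; rewrite -Hi1; apply: mul_eigsp.
- move=> l /orP[c1_l | c2_l].
    by rewrite (mulC Halg); apply: in_spec_mul_idem.
  exact: in_spec_mul_idem.
- by split=> l _; apply: dim_eigsp_mul_idem.
Qed.
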